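(* Let $\varphi=(\mathfrak{m}_1,\dots,\mathfrak{m}_\ell)$ be normalizer-adapted. Fix $1\le p\le\ell_0$ and $i\in I_p$. Then: (a) if $j\in I^+_p$ and $1\le k\le\ell$, then $[\phi_p(i)\phi_p(j)k]=[ijk]$; (b) if $j,k\in I^0_p$, then $[\phi_p(i)jk]=[ijk]$; (c) if $1\le q\le\ell_0$ with $[V_p,V_q]=0$, then $[q\,\phi_p(i)\,\phi_q(\phi_p(i))]=[q\,i\,\phi_q(i)]$.
   Context: $M=\mathsf{G}/\mathsf{H}$ almost-effective, $\mathsf{G},\mathsf{H}$ compact connected; $Q$ an $\mathrm{Ad}(\mathsf{G})$-invariant inner product on $\mathfrak{g}$, $\mathfrak{m}=\mathfrak{h}^{\perp_Q}$, $\mathfrak{m}_0=\{X\in\mathfrak{m}:[\mathfrak{h},X]=0\}$. $\varphi$ is an ordered $Q$-orthogonal decomposition of $\mathfrak{m}$ into irreducible $\mathrm{Ad}(\mathsf{H})$-modules with $\mathfrak{m}_0=\mathfrak{m}_1+\dots+\mathfrak{m}_{\ell_0}$, each $\mathfrak{m}_p$ ($p\le\ell_0$) one-dimensional, spanned by a $Q$-unit $V_p$. $[ijk]=\sum Q([e_\alpha,e_\beta],e_\gamma)^2$ over a $Q$-orthonormal adapted basis with $e_\alpha\in\mathfrak{m}_i,e_\beta\in\mathfrak{m}_j,e_\gamma\in\mathfrak{m}_k$ (symmetric in $i,j,k$). Normalizer-adapted: if $p\le\ell_0$ and $[\mathfrak{m}_p,\mathfrak{m}_i]\neq0$ then $[\mathfrak{m}_p,\mathfrak{m}_i]\cap\mathfrak{m}_j\ne0$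 for some $j$. For such $\varphi$ and $p\le\ell_0$: $I^0_p=\{i:\mathrm{ad}(V_p)|_{\mathfrak{m}_i}=0\}$, $I^+_p=\{1,\dots,\ell\}\setminus I^0_p$; for $i\in I^+_p$ there is a unique $j$ with $[pij]>0$, denoted $\phi_p(i)$, and $\phi_p(i)=i$ for $i\in I^0_p$; $I_p=\{i\in I^+_p: i<\phi_p(i)\}$. *)

(* Lie-algebraic (infinitesimal) data of M = G/H. *)
From HB Require Import structures.
From mathcomp Require Import all_boot all_order all_algebra.
From mathcomp Require Import reals.
Set Implicit Arguments. Unset Strict Implicit. Unset Printing Implicit Defensive.
Import Order.TTheory GRing.Theory Num.Theory.
Local Open Scope ring_scope.

Section Setting.
Variables (R : realType) (n : nat).
Local Notation V := 'rV[R]_n.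

Definition form (Q : 'M[R]_n) (x y : V) : R := (x *m Q *m y^T) 0 0.

Definition is_lie_bracket (br : V -> V -> V) : Prop :=
  [/\ forall a x y z, br (a *: x + y) z = a *: br x z + br y z,
      forall a x y z, br z (a *: x + y) = a *: br z x + br z y,
      forall x, br x x = 0 &
      forall x y z, br x (br y z) + br y (br z x) + br z (br x y) = 0].

(* Q is an ad(g)-invariant inner product (infinitesimal Ad(G)-invariance) *)
Definition ad_invariant_inner (br : V -> V -> V) (Q : 'M[R]_n) : Prop :=
  [/\ Q^T = Q,
      forall x, x != 0 -> 0 < form Q x x &
      forall x y z, form Q (br x y) z + form Q y (br x z) = 0].

Variables (br : V -> V -> V) (Q : 'M[R]_n).
(* The decomposition phi = (m_0,...,m_{l-1}) (0-indexed) is given by a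
   Q-orthonormal adapted basis: m_i is spanned by e i 0, ..., e i (d i - 1). *)
Variables (l : nat) (d : 'I_l -> nat) (e : 'I_l -> nat -> V).

Definition modsp (i : 'I_l) : {vspace V} :=
  <<[seq e i a | a <- iota 0 (d i)]>>%VS.
Definition msp : {vspace V} := (\sum_(i < l) modsp i)%VS.
Definition m0sp (l0 : nat) : {vspace V} := (\sum_(i < l | (i < l0)%N) modsp i)%VS.

(* h = m^{perp_Q} *)
Definition in_h (x : V) : Prop :=
  forall (i : 'I_l) (a : nat), (a < d i)%N -> form Q x (e i a) = 0.

Definition bracket3 (i j k : 'I_l) : R :=
  \sum_(a < d i) \sum_(b < d j) \sum_(c < d k)
     (form Q (br (e i a) (e j b)) (e k c)) ^+ 2.

(* V_p, the Q-unit spanning m_p for p < l0 *)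
Definition Vp (p : 'I_l) : V := e p 0.

Definition basis_hyps : Prop :=
  (forall (i j : 'I_l) (a b : nat), (a < d i)%N -> (b < d j)%N ->
       form Q (e i a) (e j b) = ((i == j) && (a == b))%:R)
  /\ (forall i : 'I_l, (0 < d i)%N).

(* h is a subalgebra, and M = G/H is almost effective:
   h contains no nonzero ideal of g *)
Definition subalgebra_effective : Prop :=
  (forall x y, in_h x -> in_h y -> in_h (br x y))
  /\ (forall W : {vspace V},
       (forall x y, x \in W -> br y x \in W) ->
       (forall x, x \in W -> in_h x) -> W = 0%VS).

(* each m_i is an irreducible ad(h)- (= Ad(H)-, H connected) module *)
Definition irreducible_modules : Prop :=
  (forall (i : 'I_l) x y, in_h x -> y \in modsp i -> br x y \in modsp i)
  /\ (forall (i : 'I_l) (W : {vspace V}), (W <= modsp i)%VS ->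
       (forall x y, in_h x -> y \in W -> br x y \in W) ->
       W != 0%VS -> W = modsp i).

Definition m0_first (l0 : nat) : Prop :=
  [/\ (l0 <= l)%N, (forall p : 'I_l, (p < l0)%N -> d p = 1%N) &
   (forall x, (x \in msp /\ forall y, in_h y -> br y x = 0) <-> x \in m0sp l0)].

Definition normalizer_adapted (l0 : nat) : Prop :=
  forall p i : 'I_l, (p < l0)%N ->
      (exists2 x, x \in modsp i & br (Vp p) x != 0) ->
      exists j : 'I_l, exists2 x, x \in modsp i &
          (br (Vp p) x != 0) && (br (Vp p) x \in modsp j).

Definition normalizer_adapted_setting (l0 : nat) : Prop :=
  [/\ is_lie_bracket br /\ ad_invariant_inner br Q, basis_hyps,
      subalgebra_effective, irreducible_modules &
      m0_first l0 /\ normalizer_adapted l0].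

Definition I0 (p i : 'I_l) : bool :=
  [forall a : 'I_(d i), br (Vp p) (e i a) == 0].

Definition phi (p i : 'I_l) : 'I_l :=
  if I0 p i then i else odflt i [pick j : 'I_l | 0 < bracket3 p i j].

Definition Iset (p i : 'I_l) : bool := ~~ I0 p i && (i < phi p i)%N.

End Setting.

(* Let D = ad(V_p). As V_p lies in m_0 it centralizes h, so D commutes with
   ad(h); by irreducibility D maps m_i into a single module m_phi(i), and phi is
   an involution on I^+_p. D^2 is Q-symmetric on m_i, hence has a real
   eigenvector, and Schur's lemma gives D^2 = -mu on m_i and on m_phi(i), with
   mu > 0 because D is Q-skew. So D / sqrt mu is an isometry m_i -> m_phi(i).
   Since D is a Q-skew derivation, T(x,y,z) = Q([x,y],z) satisfies
   T(Dx,y,z) + T(x,Dy,z) + T(x,y,Dz) = 0, whence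
   T(Dx,Dy,z)^2 = mu_x mu_y T(x,y,z)^2 whenever D^2 acts on x, y, z by scalars
   -mu_x, -mu_y, -mu_z; summing over orthonormal bases gives (a), and (b) is
   the case where D kills y and z, so that both sides vanish. For (c), ad(V_q)
   commutes with D and therefore with the isometry. *)

From Pilot Require Import Defs.
From HB Require Import structures.
From mathcomp Require Import all_boot all_order all_algebra.
From mathcomp Require Import reals complex ring.
Set Implicit Arguments. Unset Strict Implicit. Unset Printing Implicit Defensive.
Import Order.TTheory GRing.Theory Num.Theory.
Local Open Scope ring_scope.

(* [all_algebra] exports an unrelated [form] from [sesquilinear]. *)
Local Notation form := Defs.form.

(* Over [R[i]] the matrix is Hermitian, and the spectral theorem makes its
   eigenvalues real. *)
Lemma symmetric_real_eigenvector (R : rcfType) m (A : 'M[R]_m) :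
  (0 < m)%N -> A^T = A -> exists r : R, exists2 c : 'rV_m, c != 0 & c *m A = r *: c.
Proof.
case: m A => // m A _ As.
pose f := real_complex R; pose AC := map_mx f A.
have AC_herm : AC \is hermsymmx.
  apply: realsym_hermsym.
    apply/is_hermitianmxP; rewrite expr0 scale1r map_mx_id //.
    by apply/matrixP => i j; rewrite !mxE -[in LHS]As mxE.
  by apply/mxOverP => i j; rewrite mxE; apply/complex_realP; eexists.
have /orthomx_spectralP ACE := hermitian_normalmx AC_herm.
set P := spectralmx AC in ACE; set D := spectral_diag AC in ACE.
have P_unit : P \in unitmx by apply: spectral_unit.
have PAC : P *m AC = diag_mx D *m P by rewrite [in LHS]ACE !mulmxA mulmxV // mul1mx.
have [r D0r] : exists r, D 0 0 = f r.
  by apply/complex_realP; move/mxOverP: (hermitian_spectral_diag_real AC_herm); apply.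
have : eigenvalue AC (f r).
  apply/eigenvalueP; exists (row 0 P).
    by rewrite -row_mul PAC row_mul row_diag_mx -scalemxAl -rowE D0r.
  apply/eqP => P0; move: P_unit.
  rewrite unitmxE (expand_det_row _ 0) big1 ?unitr0 // => j _.
  by have := congr1 (fun v : 'rV_m.+1 => v 0 j) P0; rewrite !mxE => ->; rewrite mul0r.
rewrite eigenvalue_root_char /AC -map_char_poly fmorph_root -eigenvalue_root_char.
by move/eigenvalueP => [c cA c0]; exists r, c.
Qed.

Lemma linfunE_linear (R : fieldType) (aT rT : vectType R) (f : aT -> rT) :
  linear f -> linfun f =1 f.
Proof.
move=> f_lin; exact: (lfunE (HB.pack f (GRing.isLinear.Build R aT rT *:%R f f_lin))).
Qed.

Section LieBracket.
Variables (R : realType) (n : nat) (br : 'rV[R]_n -> 'rV[R]_n -> 'rV[R]_n).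
Hypothesis br_lie : is_lie_bracket br.

Lemma br_linearl z : linear (br^~ z).
Proof. by case: br_lie => h _ _ _ a x y; apply: h. Qed.

Lemma br_linearr z : linear (br z).
Proof. by case: br_lie => _ h _ _ a x y; apply: h. Qed.

Lemma brDl x y z : br (x + y) z = br x z + br y z.
Proof. by have := br_linearl z 1 x y; rewrite !scale1r. Qed.

Lemma brDr x y z : br z (x + y) = br z x + br z y.
Proof. by have := br_linearr z 1 x y; rewrite !scale1r. Qed.

Lemma br0l z : br 0 z = 0.
Proof. by apply: (@addrI _ (br 0 z)); rewrite -brDl !addr0. Qed.

Lemma br0r z : br z 0 = 0.
Proof. by apply: (@addrI _ (br z 0)); rewrite -brDr !addr0. Qed.

Lemma brZl a x z : br (a *: x) z = a *: br x z.
Proof. by have := br_linearl z a x 0; rewrite br0l !addr0. Qed.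

Lemma brZr a x z : br z (a *: x) = a *: br z x.
Proof. by have := br_linearr z a x 0; rewrite br0r !addr0. Qed.

Lemma brNr x z : br z (- x) = - br z x.
Proof. by rewrite -scaleN1r brZr scaleN1r. Qed.

Lemma br_sumr I r (P : pred I) (F : I -> 'rV[R]_n) z :
  br z (\sum_(i <- r | P i) F i) = \sum_(i <- r | P i) br z (F i).
Proof. exact: (big_morph _ (fun x y => brDr x y z) (br0r z)). Qed.

Lemma br_anticomm x y : br x y = - br y x.
Proof.
have [_ _ brxx _] := br_lie.
have := brxx (x + y); rewrite brDl !brDr !brxx add0r addr0.
by move/eqP; rewrite addr_eq0 => /eqP.
Qed.

Lemma br_derivation u x y : br u (br x y) = br (br u x) y + br x (br u y).
Proof.
have [_ _ _ jacobi] := br_lie.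
move/eqP: (jacobi u x y); rewrite (br_anticomm y u) brNr (br_anticomm y (br u x)).
by rewrite -addrA -opprD subr_eq0 addrC => /eqP.
Qed.

End LieBracket.

Section BilinearForm.
Variables (R : realType) (n : nat) (Q : 'M[R]_n).
Hypothesis Q_sym : Q^T = Q.

Lemma formDl x y z : form Q (x + y) z = form Q x z + form Q y z.
Proof. by rewrite /form !mulmxDl mxE. Qed.

Lemma formZl a x z : form Q (a *: x) z = a * form Q x z.
Proof. by rewrite /form -!scalemxAl mxE. Qed.

Lemma form0l z : form Q 0 z = 0.
Proof. by rewrite -(scale0r 0) formZl mul0r. Qed.

Lemma form_suml I r (P : pred I) (F : I -> 'rV[R]_n) z :
  form Q (\sum_(i <- r | P i) F i) z = \sum_(i <- r | P i) form Q (F i) z.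
Proof. exact: (big_morph _ (fun x y => formDl x y z) (form0l z)). Qed.

Lemma formC x y : form Q x y = form Q y x.
Proof.
rewrite /form; transitivity ((x *m Q *m y^T)^T 0 0); first by rewrite [in RHS]mxE.
by rewrite !trmx_mul trmxK Q_sym mulmxA.
Qed.

Lemma formDr x y z : form Q z (x + y) = form Q z x + form Q z y.
Proof. by rewrite formC formDl !(formC z). Qed.

Lemma formZr a x z : form Q z (a *: x) = a * form Q z x.
Proof. by rewrite formC formZl formC. Qed.

Lemma form0r z : form Q z 0 = 0.
Proof. by rewrite formC form0l. Qed.

End BilinearForm.

Section InvariantForm.
Variables (R : realType) (n : nat) (br : 'rV[R]_n -> 'rV[R]_n -> 'rV[R]_n).
Variable Q : 'M[R]_n.
Hypotheses (br_lie : is_lie_bracket br) (Q_inv : ad_invariant_inner br Q).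

Let Q_sym : Q^T = Q. Proof. by case: Q_inv. Qed.

Lemma form_gt0 x : x != 0 -> 0 < form Q x x.
Proof. by case: Q_inv => _ + _; apply. Qed.

Lemma form_ge0 x : 0 <= form Q x x.
Proof. by have [->|/form_gt0/ltW//] := eqVneq x 0; rewrite form0l. Qed.

Lemma form_ad_skew u x z : form Q (br u x) z = - form Q x (br u z).
Proof. by case: Q_inv => _ _ /(_ u x z) /eqP; rewrite addr_eq0 => /eqP. Qed.

Lemma form_br_ad u x y z :
  form Q (br (br u x) y) z + form Q (br x (br u y)) z + form Q (br x y) (br u z) = 0.
Proof. by rewrite -formDl -(br_derivation br_lie) form_ad_skew addNr. Qed.

(* Eliminating the three mixed terms between four instances of [form_br_ad]. *)
Lemma sqr_form_br_ad u x y z (A B C : R) :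
  br u (br u x) = - A *: x -> br u (br u y) = - B *: y -> br u (br u z) = - C *: z ->
  form Q (br (br u x) (br u y)) z ^+ 2 = A * B * form Q (br x y) z ^+ 2.
Proof.
move=> uux uuy uuz.
have e1 := form_br_ad u (br u x) y z.
have e2 := form_br_ad u x (br u y) z.
have e3 := form_br_ad u x y (br u z).
have e4 := form_br_ad u (br u x) (br u y) (br u z).
rewrite uux (brZl br_lie) formZl in e1; rewrite uuy (brZr br_lie) formZl in e2.
rewrite uuz (formZr Q_sym) in e3.
rewrite uux uuy uuz (brZl br_lie) formZl (brZr br_lie) formZl (formZr Q_sym) in e4.
move: e1 e2 e3 e4.
set P := form Q (br x y) z; set U := form Q (br (br u x) (br u y)) z.
set Y := form Q (br (br u x) y) (br u z); set Z := form Q (br x (br u y)) (br u z).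
move=> e1 e2 e3 e4.
have key : 2 * (U ^+ 2 - A * B * P ^+ 2) =
  U * ((- A * P + U + Y) + (U + - B * P + Z) - (Y + Z + - C * P)) +
  P * (A * (U + - B * P + Z) + B * (- A * P + U + Y) + (- A * Z + - B * Y + - C * U)).
  by ring.
move: key; rewrite e1 e2 e3 e4 !(mulr0, addr0, subr0) => /eqP.
by rewrite mulf_eq0 pnatr_eq0 /= subr_eq0 => /eqP.
Qed.

Lemma form_br_eq0_ad u x y z (mu : R) : mu != 0 ->
  br u (br u x) = - mu *: x -> br u y = 0 -> br u z = 0 -> form Q (br x y) z = 0.
Proof.
move=> mu0 uux uy uz; have := form_br_ad u (br u x) y z.
rewrite uux uy uz (br0r br_lie) form0l (form0r Q_sym) !addr0.
rewrite (brZl br_lie) formZl mulNr => /eqP.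
by rewrite oppr_eq0 mulf_eq0 (negbTE mu0) => /eqP.
Qed.

End InvariantForm.

Section OrthonormalBasis.
Variables (R : realType) (n : nat) (Q : 'M[R]_n).
Variables (l : nat) (d : 'I_l -> nat) (e : 'I_l -> nat -> 'rV[R]_n).
Hypotheses (Q_sym : Q^T = Q) (e_basis : basis_hyps Q d e).
Local Notation M := (modsp d e).

Lemma form_e i j a b : (a < d i)%N -> (b < d j)%N ->
  form Q (e i a) (e j b) = ((i == j) && (a == b))%:R.
Proof. by case: e_basis => + _; apply. Qed.

Lemma form_e_ord k (a b : 'I_(d k)) : form Q (e k a) (e k b) = (a == b)%:R.
Proof. by rewrite form_e // eqxx. Qed.

Lemma mem_e_modsp k a : (a < d k)%N -> e k a \in M k.
Proof. by move=> ak; apply/memv_span/mapP; exists a; rewrite ?mem_iota. Qed.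

Lemma form_sum_e k (c : 'I_(d k) -> R) (b : 'I_(d k)) :
  form Q (\sum_(a < d k) c a *: e k a) (e k b) = c b.
Proof.
rewrite form_suml (bigD1 b) //= formZl form_e_ord eqxx mulr1 big1 ?addr0 // => a ab.
by rewrite formZl form_e_ord (negbTE ab) mulr0.
Qed.

Lemma mem_modspP k x :
  reflect (exists c : 'I_(d k) -> R, x = \sum_(a < d k) c a *: e k a) (x \in M k).
Proof.
apply: (iffP idP) => [|[c ->]]; last by apply: rpred_sum => a _; apply/rpredZ/mem_e_modsp.
rewrite /modsp span_def big_map -{1}(subn0 (d k)) -/(index_iota 0 (d k)) big_mkord.
move=> /memv_sumP [x_ x_line ->]; exists (fun a => form Q (x_ a) (e k a)).
apply: eq_bigr => a _; have /vlineP [c ->] := x_line a isT.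
by rewrite formZl form_e_ord eqxx mulr1.
Qed.

Lemma modsp_expand k x : x \in M k -> x = \sum_(a < d k) form Q x (e k a) *: e k a.
Proof. by case/mem_modspP => c ->; apply: eq_bigr => a _; rewrite form_sum_e. Qed.

Lemma form_modsp_e k j x b : x \in M k -> j != k -> (b < d j)%N -> form Q x (e j b) = 0.
Proof.
move=> /mem_modspP [c ->] jk bj; rewrite form_suml big1 // => a _.
by rewrite formZl form_e // eq_sym (negbTE jk) mulr0.
Qed.

Lemma form_modsp_expand k x w : x \in M k ->
  form Q x w = \sum_(a < d k) form Q x (e k a) * form Q (e k a) w.
Proof. by move/modsp_expand => {1}->; rewrite form_suml; under eq_bigr do rewrite formZl. Qed.

Lemma form_modsp_norm k x : x \in M k -> form Q x x = \sum_(a < d k) form Q x (e k a) ^+ 2.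
Proof. by move/form_modsp_expand ->; under eq_bigr do rewrite (formC Q_sym (e k _)) -expr2. Qed.

End OrthonormalBasis.
Arguments mem_e_modsp {R n l d e k a}.

Section NormalizerAdapted.
Variables (R : realType) (n : nat) (br : 'rV[R]_n -> 'rV[R]_n -> 'rV[R]_n).
Variables (Q : 'M[R]_n) (l : nat) (d : 'I_l -> nat) (e : 'I_l -> nat -> 'rV[R]_n).
Variable l0 : nat.
Hypothesis setting : normalizer_adapted_setting br Q d e l0.

Local Notation V := 'rV[R]_n.
Local Notation M := (modsp d e).
Local Notation adV p := (br (Vp e p)).
Local Notation I0 := (I0 br d e).
Local Notation phi := (phi br Q d e).
Local Notation bracket3 := (bracket3 br Q d e).
Implicit Types (p q i j k : 'I_l) (x y z w : V).

Let br_lie : is_lie_bracket br. Proof. by case: setting => -[]. Qed.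
Let Q_inv : ad_invariant_inner br Q. Proof. by case: setting => -[]. Qed.
Let Q_sym : Q^T = Q. Proof. by case: Q_inv. Qed.
Let e_basis : basis_hyps Q d e. Proof. by case: setting. Qed.
Let d_gt0 k : (0 < d k)%N. Proof. by case: e_basis. Qed.
Let modsp_h_stable k x y : in_h Q d e x -> y \in M k -> br x y \in M k.
Proof. by case: setting => _ _ _ [h _] _; apply: h. Qed.

Lemma modsp_stable_preimage k (g : V -> V) (U : {vspace V}) x0 : linear g ->
  (forall y w, in_h Q d e y -> w \in M k -> g w \in U -> g (br y w) \in U) ->
  x0 \in M k -> x0 != 0 -> g x0 \in U -> {in M k, forall x, g x \in U}.
Proof.
move=> g_lin g_stable x0k x0_neq0 gx0 x xk.
have [[_ M_irr] memW] : irreducible_modules br Q d e /\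
    forall x, x \in (M k :&: linfun g @^-1: U)%VS = (x \in M k) && (g x \in U).
  by case: setting; split=> // y; rewrite memv_cap -memv_preim linfunE_linear.
suff WE : (M k :&: linfun g @^-1: U)%VS = M k by move: xk; rewrite -WE memW => /andP[].
apply: M_irr; first exact: capvSl.
  by move=> y w hy; rewrite !memW => /andP [wk gw]; rewrite modsp_h_stable ?g_stable.
by apply: contraNneq x0_neq0 => W0; move: (memW x0); rewrite W0 memv0 x0k gx0 => ->.
Qed.

Lemma d_Vp p : (p < l0)%N -> d p = 1%N.
Proof. by case: setting => _ _ _ _ [[_ + _] _]; apply. Qed.

Lemma br_h_Vp p y : (p < l0)%N -> in_h Q d e y -> br y (Vp e p) = 0.
Proof.
move=> pl0 hy; case: setting => _ _ _ _ [[_ _ m0E] _].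
suff /m0E[_] : Vp e p \in m0sp d e l0 by apply.
by rewrite memvE (sumv_sup p) // -memvE mem_e_modsp.
Qed.

Lemma adV_br_h p y w : (p < l0)%N -> in_h Q d e y -> adV p (br y w) = br y (adV p w).
Proof.
move=> pl0 hy; rewrite (br_derivation br_lie) (br_anticomm br_lie (Vp e p) y).
by rewrite br_h_Vp // oppr0 (br0l br_lie) add0r.
Qed.

Lemma I0P p k : reflect (forall a : 'I_(d k), adV p (e k a) = 0) (I0 p k).
Proof. by apply: (iffP forallP) => h a; apply/eqP/h. Qed.

Lemma I0Pn p k : reflect (exists a : 'I_(d k), adV p (e k a) != 0) (~~ I0 p k).
Proof. by rewrite negb_forall; apply: existsP. Qed.

Lemma bracket3_Vp p i j : (p < l0)%N ->
  bracket3 p i j = \sum_(b < d i) \sum_(c < d j) form Q (adV p (e i b)) (e j c) ^+ 2.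
Proof.
move=> pl0; rewrite /Defs.bracket3.
have a0 (a : 'I_(d p)) : nat_of_ord a = 0%N.
  by have := ltn_ord a; rewrite [X in (_ < X)%N](d_Vp pl0) ltnS leqn0 => /eqP.
by under eq_bigr => a _ do rewrite a0; rewrite sumr_const card_ord (d_Vp pl0).
Qed.

Lemma bracket3_I0 p k j : (p < l0)%N -> I0 p k -> bracket3 p k j = 0.
Proof.
move=> pl0 /I0P kI0; rewrite bracket3_Vp //.
by apply: big1 => b _; apply: big1 => c _; rewrite kI0 form0l expr0n.
Qed.

Lemma bracket3_sym23 i j k : bracket3 i j k = bracket3 i k j.
Proof.
rewrite /Defs.bracket3; apply: eq_bigr => a _; rewrite exchange_big; apply: eq_bigr => c _.
by apply: eq_bigr => b _; rewrite (form_ad_skew Q_inv) (formC Q_sym) sqrrN.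
Qed.

Lemma adV_modsp_image p k : (p < l0)%N -> ~~ I0 p k ->
  exists j, {in M k, forall x, adV p x \in M j}.
Proof.
move=> pl0 /I0Pn [a Da].
have [j [x xk /andP [Dx_neq0 Dxj]]] : exists j, exists2 x, x \in M k &
    (adV p x != 0) && (adV p x \in M j).
  case: setting => _ _ _ _ [_ adapted]; apply: adapted => //.
  by exists (e k a); rewrite ?mem_e_modsp.
exists j; apply: (modsp_stable_preimage (br_linearr br_lie _) _ xk _ Dxj).
  by move=> y w hy wk Dw; rewrite adV_br_h // modsp_h_stable.
by apply: contraNneq Dx_neq0 => ->; rewrite (br0r br_lie).
Qed.

Lemma bracket3_adV_image p k j : (p < l0)%N -> {in M k, forall x, adV p x \in M j} ->
  bracket3 p k j = \sum_(b < d k) form Q (adV p (e k b)) (adV p (e k b)).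
Proof.
move=> pl0 Dkj; rewrite bracket3_Vp //; apply: eq_bigr => b _.
by rewrite (form_modsp_norm Q_sym e_basis (Dkj _ (mem_e_modsp (ltn_ord b)))).
Qed.

Lemma bracket3_adV_other p k j j' : (p < l0)%N -> {in M k, forall x, adV p x \in M j} ->
  j' != j -> bracket3 p k j' = 0.
Proof.
move=> pl0 Dkj j'j; rewrite bracket3_Vp //; apply: big1 => b _; apply: big1 => c _.
by rewrite (form_modsp_e e_basis (Dkj _ (mem_e_modsp (ltn_ord b)))) ?expr0n.
Qed.

Lemma sum_form_adV_gt0 p k : ~~ I0 p k ->
  0 < \sum_(b < d k) form Q (adV p (e k b)) (adV p (e k b)).
Proof.
move=> /I0Pn [a Da]; apply: lt_le_trans (form_gt0 Q_inv Da) _.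
rewrite (bigD1 a) //= lerDl; apply: sumr_ge0 => b _; exact: (form_ge0 Q_inv).
Qed.

Lemma phi_adV_image p k j : (p < l0)%N -> ~~ I0 p k ->
  {in M k, forall x, adV p x \in M j} -> phi p k = j.
Proof.
move=> pl0 kI0 Dkj.
have jpos : 0 < bracket3 p k j by rewrite (bracket3_adV_image pl0 Dkj) sum_form_adV_gt0.
rewrite /Defs.phi (negbTE kI0); case: pickP => [j' /= | /(_ j) /=]; last by rewrite jpos.
by apply: contraTeq => /(bracket3_adV_other pl0 Dkj) ->; rewrite ltxx.
Qed.

Lemma adV_modsp_phi p k : (p < l0)%N -> ~~ I0 p k ->
  {in M k, forall x, adV p x \in M (phi p k)}.
Proof.
move=> pl0 kI0; have [j Dkj] := adV_modsp_image pl0 kI0.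
by rewrite (phi_adV_image pl0 kI0 Dkj).
Qed.

Lemma bracket3_phi p k : (p < l0)%N ->
  bracket3 p k (phi p k) = \sum_(b < d k) form Q (adV p (e k b)) (adV p (e k b)).
Proof.
move=> pl0; have [kI0|kI0] := boolP (I0 p k).
  by rewrite bracket3_I0 // big1 // => b _; move/I0P: kI0 => ->; apply: form0l.
exact: bracket3_adV_image (adV_modsp_phi pl0 kI0).
Qed.

Lemma phi_notI0 p k : (p < l0)%N -> ~~ I0 p k -> ~~ I0 p (phi p k).
Proof.
move=> pl0 kI0; have := sum_form_adV_gt0 kI0.
rewrite -bracket3_phi // bracket3_sym23.
by apply: contraTN => /(bracket3_I0 _ pl0) ->; rewrite ltxx.
Qed.

Lemma phiK p k : (p < l0)%N -> ~~ I0 p k -> phi p (phi p k) = k.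
Proof.
move=> pl0 kI0; have := sum_form_adV_gt0 kI0.
rewrite -bracket3_phi // bracket3_sym23.
have [j Dj] := adV_modsp_image pl0 (phi_notI0 pl0 kI0).
rewrite (phi_adV_image pl0 (phi_notI0 pl0 kI0) Dj).
by apply: contraTeq; rewrite eq_sym => /(bracket3_adV_other pl0 Dj) ->; rewrite ltxx.
Qed.

Lemma adV_sqr_modsp p k : (p < l0)%N -> ~~ I0 p k ->
  {in M k, forall x, adV p (adV p x) \in M k}.
Proof.
move=> pl0 kI0 x xk.
have := adV_modsp_phi pl0 (phi_notI0 pl0 kI0) (adV_modsp_phi pl0 kI0 xk).
by rewrite phiK.
Qed.

Lemma adV_sqr_eigenvector p k : (p < l0)%N -> ~~ I0 p k ->
  exists r : R, exists2 x, (x \in M k) && (x != 0) & adV p (adV p x) = r *: x.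
Proof.
move=> pl0 kI0.
pose A : 'M[R]_(d k) := \matrix_(a, b) form Q (adV p (adV p (e k a))) (e k b).
have A_sym : A^T = A.
  apply/matrixP => a b; rewrite !mxE (form_ad_skew Q_inv).
  by rewrite [RHS](form_ad_skew Q_inv) (formC Q_sym).
have [r [c c_neq0 cA]] := symmetric_real_eigenvector (d_gt0 k) A_sym.
pose x := \sum_(a < d k) c 0 a *: e k a.
have xk : x \in M k by apply/(mem_modspP e_basis); exists (c 0).
exists r, x.
  rewrite xk; apply: contraNneq c_neq0 => x0; apply/eqP/rowP => b.
  by rewrite mxE -(form_sum_e e_basis (c 0) b) -/x x0 form0l.
rewrite (modsp_expand e_basis (adV_sqr_modsp pl0 kI0 xk)) /x scaler_sumr.
apply: eq_bigr => b _; rewrite scalerA; congr (_ *: _).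
have := congr1 (fun v : 'rV_(d k) => v 0 b) cA; rewrite !mxE => <-.
rewrite !(br_sumr br_lie) form_suml; apply: eq_bigr => a _.
by rewrite !(brZr br_lie) formZl mxE.
Qed.

(* Schur's lemma: an eigenspace of [ad(V_p)^2] in [m_k] is a nonzero
   [ad(h)]-submodule. *)
Lemma adV_sqr_scalar p k : (p < l0)%N -> ~~ I0 p k ->
  exists2 mu : R, 0 < mu & {in M k, forall x, adV p (adV p x) = - mu *: x}.
Proof.
move=> pl0 kI0; have [r [x /andP [xk x_neq0] DDx]] := adV_sqr_eigenvector pl0 kI0.
have DD_r : {in M k, forall y, adV p (adV p y) = r *: y}.
  have g_lin : linear (fun y => adV p (adV p y) - r *: y).
    move=> a y z; rewrite !(brDr br_lie) !(brZr br_lie) scalerDr scalerA (mulrC r).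
    by rewrite -scalerA opprD addrACA scalerBr.
  move=> y yk; apply/eqP; rewrite -subr_eq0 -memv0.
  apply: (modsp_stable_preimage g_lin _ xk x_neq0) => //; last by rewrite DDx subrr memv0.
  move=> z w hz wk; rewrite !memv0 !(adV_br_h _ pl0 hz).
  rewrite -(brZr br_lie) -(brNr br_lie) -(brDr br_lie) => /eqP ->.
  by rewrite (br0r br_lie).
have /I0Pn [a Da] := kI0.
exists (- r); last by move=> y /DD_r ->; rewrite opprK.
have := form_gt0 Q_inv Da; rewrite (form_ad_skew Q_inv) DD_r ?mem_e_modsp //.
by rewrite (formZr Q_sym) (form_e_ord e_basis) eqxx mulr1.
Qed.

Lemma adV_sqr_scalar_phi p i : (p < l0)%N -> ~~ I0 p i ->
  exists2 mu : R, 0 < mu &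
    {in M i, forall x, adV p (adV p x) = - mu *: x} /\
    {in M (phi p i), forall x, adV p (adV p x) = - mu *: x}.
Proof.
move=> pl0 iI0; have [mu mu_gt0 DDi] := adV_sqr_scalar pl0 iI0.
have [mu' _ DDj] := adV_sqr_scalar pl0 (phi_notI0 pl0 iI0).
exists mu => //; split => // x xj; rewrite DDj //; congr (_ *: _).
have /I0Pn [a Da] := iI0.
have := DDj _ (adV_modsp_phi pl0 iI0 (mem_e_modsp (ltn_ord a))).
rewrite (DDi (e i a)) ?mem_e_modsp // (brZr br_lie) => /eqP.
by rewrite -subr_eq0 -scalerBl scaler_eq0 (negbTE Da) orbF subr_eq0 => /eqP.
Qed.

(* [ad(V_p)] maps an orthonormal basis of [m_i] to [sqrt mu] times an
   orthonormal basis of [m_phi(i)], so it transports traces of bilinear forms. *)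
Lemma sum_bilinear_adV p i (mu : R) (g : V -> V -> R) : (p < l0)%N -> ~~ I0 p i ->
  {in M (phi p i), forall x, adV p (adV p x) = - mu *: x} ->
  (forall z, {morph g^~ z : x y / x + y}) -> (forall a x z, g (a *: x) z = a * g x z) ->
  (forall z, {morph g z : x y / x + y}) -> (forall a x z, g z (a *: x) = a * g z x) ->
  mu * \sum_(b < d (phi p i)) g (e (phi p i) b) (e (phi p i) b) =
  \sum_(a < d i) g (adV p (e i a)) (adV p (e i a)).
Proof.
move=> pl0 iI0 DDj gDl gZl gDr gZr; set j := phi p i in DDj *.
have g0l z : g 0 z = 0 by rewrite -(scale0r 0) gZl mul0r.
have g0r z : g z 0 = 0 by rewrite -(scale0r 0) gZr mul0r.
have g_suml (F : 'I_(d j) -> V) z : g (\sum_b F b) z = \sum_b g (F b) z.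
  exact: (big_morph _ (gDl z) (g0l z)).
have g_sumr (F : 'I_(d j) -> V) z : g z (\sum_b F b) = \sum_b g z (F b).
  exact: (big_morph _ (gDr z) (g0r z)).
have Dj_i (b : 'I_(d j)) : adV p (e j b) \in M i.
  have := adV_modsp_phi pl0 (phi_notI0 pl0 iI0) (mem_e_modsp (ltn_ord b)).
  by rewrite phiK.
have frame (b b' : 'I_(d j)) : \sum_(a < d i)
    form Q (adV p (e i a)) (e j b) * form Q (adV p (e i a)) (e j b') = mu * (b == b')%:R.
  transitivity (form Q (adV p (e j b)) (adV p (e j b'))).
    rewrite (form_modsp_expand e_basis _ (Dj_i b)); apply: eq_bigr => a _.
    rewrite (form_ad_skew Q_inv _ (e i a) (e j b)) (form_ad_skew Q_inv _ (e i a) (e j b')).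
    by rewrite mulrNN (formC Q_sym (e i a)).
  rewrite (form_ad_skew Q_inv) DDj ?mem_e_modsp // (formZr Q_sym) (form_e_ord e_basis).
  by rewrite mulNr opprK.
transitivity (\sum_(a < d i) \sum_(b < d j) \sum_(b' < d j)
    form Q (adV p (e i a)) (e j b) * form Q (adV p (e i a)) (e j b') * g (e j b) (e j b'));
    last first.
  apply: eq_bigr => a _; symmetry.
  rewrite {1 2}(modsp_expand e_basis (adV_modsp_phi pl0 iI0 (mem_e_modsp (ltn_ord a)))).
  rewrite g_suml; apply: eq_bigr => b _; rewrite gZl g_sumr mulr_sumr.
  by apply: eq_bigr => b' _; rewrite gZr mulrA.
rewrite exchange_big mulr_sumr; apply: eq_bigr => b _ /=.
rewrite exchange_big (bigD1 b) //= -mulr_suml frame eqxx mulr1 big1 ?addr0 // => b' b'b.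
by rewrite -mulr_suml frame eq_sym (negbTE b'b) mulr0 mul0r.
Qed.

Lemma sum_sqr_adV p i (mu : R) (f : V -> R) : (p < l0)%N -> ~~ I0 p i ->
  {in M (phi p i), forall x, adV p (adV p x) = - mu *: x} ->
  {morph f : x y / x + y} -> (forall a x, f (a *: x) = a * f x) ->
  mu * \sum_(b < d (phi p i)) f (e (phi p i) b) ^+ 2 =
  \sum_(a < d i) f (adV p (e i a)) ^+ 2.
Proof.
move=> pl0 iI0 DDj fD fZ; under eq_bigr do rewrite expr2; under [RHS]eq_bigr do rewrite expr2.
apply: (sum_bilinear_adV (g := fun x y => f x * f y)) => // [z x y|a x z|z x y|a x z] /=.
- by rewrite fD mulrDl.
- by rewrite fZ mulrA.
- by rewrite fD mulrDr.
- by rewrite fZ mulrCA.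
Qed.

Lemma bracket3_phi_phi p i j k : (p < l0)%N -> ~~ I0 p i -> ~~ I0 p j ->
  bracket3 (phi p i) (phi p j) k = bracket3 i j k.
Proof.
move=> pl0 iI0 jI0.
have [mui mui_gt0 [DDi DDi']] := adV_sqr_scalar_phi pl0 iI0.
have [muj muj_gt0 [DDj DDj']] := adV_sqr_scalar_phi pl0 jI0.
have [C DDk] : exists C : R, forall c : 'I_(d k), adV p (adV p (e k c)) = - C *: e k c.
  have [/I0P kI0 | kI0] := boolP (I0 p k).
    by exists 0 => c; rewrite kI0 (br0r br_lie) oppr0 scale0r.
  have [muk _ DDk] := adV_sqr_scalar pl0 kI0.
  by exists muk => c; rewrite DDk ?mem_e_modsp.
apply: (mulfI (mulf_neq0 (lt0r_neq0 mui_gt0) (lt0r_neq0 muj_gt0))).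
transitivity (muj * \sum_(b < d (phi p j)) \sum_(c < d k) \sum_(a < d i)
                 form Q (br (adV p (e i a)) (e (phi p j) b)) (e k c) ^+ 2).
  rewrite (mulrC mui) -mulrA; congr (_ * _).
  rewrite /Defs.bracket3 exchange_big mulr_sumr; apply: eq_bigr => b _.
  rewrite exchange_big mulr_sumr; apply: eq_bigr => c _.
  apply: (sum_sqr_adV (f := fun x => form Q (br x (e (phi p j) b)) (e k c))) => // [x y|a x] /=.
  - by rewrite (brDl br_lie) formDl.
  - by rewrite (brZl br_lie) formZl.
transitivity (\sum_(a < d i) \sum_(c < d k) \sum_(b < d j)
                 form Q (br (adV p (e i a)) (adV p (e j b))) (e k c) ^+ 2).
  under eq_bigr do rewrite exchange_big.
  rewrite exchange_big mulr_sumr; apply: eq_bigr => a _.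
  rewrite exchange_big mulr_sumr; apply: eq_bigr => c _.
  apply: (sum_sqr_adV (f := fun y => form Q (br (adV p (e i a)) y) (e k c))) => // [x y|a' x] /=.
  - by rewrite (brDr br_lie) formDl.
  - by rewrite (brZr br_lie) formZl.
rewrite /Defs.bracket3 mulr_sumr; apply: eq_bigr => a _.
rewrite exchange_big mulr_sumr; apply: eq_bigr => b _.
rewrite mulr_sumr; apply: eq_bigr => c _.
by rewrite (sqr_form_br_ad br_lie Q_inv (DDi _ (mem_e_modsp (ltn_ord a)))
  (DDj _ (mem_e_modsp (ltn_ord b))) (DDk c)).
Qed.

Lemma bracket3_phi_I0 p i j k : (p < l0)%N -> ~~ I0 p i -> I0 p j -> I0 p k ->
  bracket3 (phi p i) j k = bracket3 i j k.
Proof.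
move=> pl0 iI0 /I0P jI0 /I0P kI0.
have [mu /lt0r_neq0 mu_neq0 [DDi DDi']] := adV_sqr_scalar_phi pl0 iI0.
have vanish i' : {in M i', forall x, adV p (adV p x) = - mu *: x} -> bracket3 i' j k = 0.
  move=> DD; apply: big1 => a _; apply: big1 => b _; apply: big1 => c _.
  have DDa := DD _ (mem_e_modsp (ltn_ord a)).
  by rewrite (form_br_eq0_ad br_lie Q_inv mu_neq0 DDa (jI0 b) (kI0 c)) expr0n.
by rewrite (vanish _ DDi) (vanish _ DDi').
Qed.

Lemma bracket3_phi_commuting p q i : (p < l0)%N -> (q < l0)%N -> ~~ I0 p i ->
  br (Vp e p) (Vp e q) = 0 ->
  bracket3 q (phi p i) (phi q (phi p i)) = bracket3 q i (phi q i).
Proof.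
move=> pl0 ql0 iI0 pq0; rewrite !bracket3_phi //.
have [mu mu_gt0 [DDi DDi']] := adV_sqr_scalar_phi pl0 iI0.
have adV_comm w : adV q (adV p w) = adV p (adV q w).
  by rewrite (br_derivation br_lie) (br_anticomm br_lie (Vp e q)) pq0 oppr0 (br0l br_lie) add0r.
apply: (mulfI (lt0r_neq0 mu_gt0)).
rewrite (sum_bilinear_adV (g := fun x y => form Q (adV q x) (adV q y))) //
  => [|z x y|a x z|z x y|a x z] /=; last first.
- by rewrite (brZr br_lie) (formZr Q_sym).
- by rewrite (brDr br_lie) (formDr Q_sym).
- by rewrite (brZr br_lie) formZl.
- by rewrite (brDr br_lie) formDl.
rewrite mulr_sumr; apply: eq_bigr => a _.
rewrite adV_comm (form_ad_skew Q_inv) -!adV_comm DDi ?mem_e_modsp //.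
by rewrite (brZr br_lie) (formZr Q_sym) mulNr opprK.
Qed.

End NormalizerAdapted.

Theorem lemma5p4 (R : realType) (n : nat)
  (br : 'rV[R]_n -> 'rV[R]_n -> 'rV[R]_n) (Q : 'M[R]_n)
  (l : nat) (d : 'I_l -> nat) (e : 'I_l -> nat -> 'rV[R]_n) (l0 : nat)
  (p i : 'I_l) :
  normalizer_adapted_setting br Q d e l0 ->
  (p < l0)%N ->
  Iset br Q d e p i ->
  [/\ (forall j k : 'I_l, ~~ I0 br d e p j ->
         bracket3 br Q d e (phi br Q d e p i) (phi br Q d e p j) k
         = bracket3 br Q d e i j k),
      (forall j k : 'I_l, I0 br d e p j -> I0 br d e p k ->
         bracket3 br Q d e (phi br Q d e p i) j k = bracket3 br Q d e i j k) &
      (forall q : 'I_l, (q < l0)%N -> br (Vp e p) (Vp e q) = 0 ->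
         bracket3 br Q d e q (phi br Q d e p i)
                  (phi br Q d e q (phi br Q d e p i))
         = bracket3 br Q d e q i (phi br Q d e q i))].
Proof.
move=> setting pl0 /andP [iI0 _]; split.
- by move=> j k; apply: (bracket3_phi_phi setting).
- by move=> j k; apply: (bracket3_phi_I0 setting).
- by move=> q ql0; apply: (bracket3_phi_commuting setting).
Qed.
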